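(* Let $E$ be a Banach space, $P$ a metric space, and $F:[0,+\infty)\times E\times P\to E$ continuous, continuous uniformly with respect to the first variable, such that $\{F(t,\bar u,\mu)\mid t\geq0\}$ is relatively compact for all $\bar u\in E$, $\mu\in P$, and such that there is a continuous $\widehat F:E\times P\to E$ with $\widehat F(\bar u,\mu)=\lim_{T\to+\infty,\ \bar v\to\bar u,\ \nu\to\mu}\frac1T\int_0^TF(\tau+h,\bar v,\nu)\,d\tau$ for all $\bar u\in E$, $\mu\in P$, $h>0$, uniformly with respect to $h>0$. Let $Q\subset E$ be compact. Then for any $(T_n)$ in $(0,+\infty)$ with $T_n\to+\infty$ and $(\mu_n)$ in $P$ with $\mu_n\to\mu_0$, the convergence $\lim_{n\to+\infty}\frac1{T_n}\int_0^{T_n}F(\tau+h,\bar w,\mu_n)\,d\tau=\widehat F(\bar w,\mu_0)$ is uniform with respect to $\bar w\in Q$ and $h>0$. *)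

From Stdlib Require Import Reals List.
From Coquelicot Require Import Coquelicot.
Open Scope R_scope.

Record MetricSpace := {
  ms_carrier :> Type;
  mdist : ms_carrier -> ms_carrier -> R;
  mdist_nonneg : forall x y, 0 <= mdist x y;
  mdist_eq0 : forall x y, mdist x y = 0 <-> x = y;
  mdist_sym : forall x y, mdist x y = mdist y x;
  mdist_triangle : forall x y z, mdist x z <= mdist x y + mdist y z
}.

Definition compact_set {E : CompleteNormedModule R_AbsRing} (K : E -> Prop) : Prop :=
  forall (I : Type) (U : I -> E -> Prop),
    (forall i, open (U i)) ->
    (forall x, K x -> exists i, U i x) ->
    exists l : list I, forall x, K x -> exists i, In i l /\ U i x.

Definition closure_set {E : CompleteNormedModule R_AbsRing} (A : E -> Prop) : E -> Prop :=
  fun x => forall eps, 0 < eps -> exists y, A y /\ norm (minus y x) < eps.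

Definition relatively_compact {E : CompleteNormedModule R_AbsRing} (A : E -> Prop) : Prop :=
  compact_set (closure_set A).

Definition avg {E : CompleteNormedModule R_AbsRing} {P : MetricSpace}
  (F : R -> E -> P -> E) (T h : R) (v : E) (nu : P) : E :=
  scal (/ T) (RInt (fun tau => F (tau + h) v nu) 0 T).

(* Compactness of Q turns the pointwise limit defining [Fhat] into a uniform one.
   Around each w in Q the hypothesis on [Fhat] gives a threshold T0 and a radius r
   such that averages at any point of the r-ball, with parameter r-close to mu0 and
   T > T0, are eps/2-close to Fhat(w, mu0); shrinking r, continuity of Fhat keeps
   Fhat(., mu0) eps/2-close to Fhat(w, mu0) on that ball.  Finitely many balls cover
   Q, so one threshold and one radius serve all of Q, and the triangle inequality
   through Fhat(w_i, mu0) concludes. *)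

From Stdlib Require Import Reals List Lra Lia.
From Coquelicot Require Import Coquelicot.
Open Scope R_scope.

Lemma open_norm_ball (K : AbsRing) (V : NormedModule K) (c : V) (r : R) :
  open (fun x : V => norm (minus x c) < r).
Proof.
  intros x Hx.
  set (d := norm (minus x c)) in Hx.
  pose proof (@norm_factor_gt_0 K V) as Hnf.
  assert (Hrad : 0 < (r - d) / (2 * @norm_factor K V)) by (apply Rdiv_lt_0_compat; lra).
  exists (mkposreal _ Hrad). intros y Hy.
  apply norm_compat2 in Hy. simpl in Hy.
  replace (norm_factor * ((r - d) / (2 * norm_factor))) with ((r - d) / 2) in Hy
    by (field; lra).
  rewrite (minus_trans x).
  eapply Rle_lt_trans; [apply norm_triangle|].
  unfold d in *. lra.
Qed.

Lemma list_upper_lower_bounds {I : Type} (f g : I -> R) (l : list I) :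
  (forall i, 0 < g i) ->
  exists M m, 0 < m /\ forall i, In i l -> f i <= M /\ m <= g i.
Proof.
  intros Hg. induction l as [|a l IH].
  - exists 0, 1. split; [lra | intros i []].
  - destruct IH as [M [m [Hm Hb]]].
    exists (Rmax M (f a)), (Rmin m (g a)). split; [now apply Rmin_pos|].
    intros i [<- | Hi]; [split; [apply Rmax_r | apply Rmin_r]|].
    destruct (Hb i Hi) as [HM Hmi]. split.
    + eapply Rle_trans; [exact HM | apply Rmax_l].
    + eapply Rle_trans; [apply Rmin_l | exact Hmi].
Qed.

Lemma compact_uniform_threshold_radius (E : CompleteNormedModule R_AbsRing)
  (Q : E -> Prop) (Local : E -> R -> R -> Prop) :
  compact_set Q ->
  (forall c, Q c -> exists T r, 0 < r /\ Local c T r) ->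
  exists M m, 0 < m /\ forall w, Q w ->
    exists c T r, Local c T r /\ norm (minus w c) < r /\ T <= M /\ m <= r.
Proof.
  intros HQ Hloc.
  pose (I := { p : E * R * R | 0 < snd p /\ Local (fst (fst p)) (snd (fst p)) (snd p) }).
  pose (ball_of := fun (i : I) (x : E) =>
    norm (minus x (fst (fst (proj1_sig i)))) < snd (proj1_sig i)).
  destruct (HQ I ball_of) as [l Hl].
  - intros i. apply open_norm_ball.
  - intros x Qx. destruct (Hloc x Qx) as [T [r [Hr HL]]].
    assert (Hcenter : norm (minus x x) = 0) by (rewrite minus_eq_zero; exact (@norm_zero R_AbsRing E)).
    exists (exist _ (x, T, r) (conj Hr HL)). unfold ball_of; simpl.
    now rewrite Hcenter.
  - destruct (list_upper_lower_bounds (fun i : I => snd (fst (proj1_sig i)))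
                (fun i : I => snd (proj1_sig i)) l) as [M [m [Hm Hb]]].
    { intros i. exact (proj1 (proj2_sig i)). }
    exists M, m. split; [exact Hm|]. intros w Qw.
    destruct (Hl w Qw) as [i [Hin Hw]].
    destruct (Hb i Hin) as [HM Hmr].
    destruct i as [[[c T] r] [Hr HL]]. simpl in *.
    exists c, T, r. auto.
Qed.

Theorem lemma2p4 (E : CompleteNormedModule R_AbsRing) (P : MetricSpace)
  (F : R -> E -> P -> E) (Fhat : E -> P -> E)
  (* F continuous on [0,+oo) x E x P *)
  (HFc : forall t u mu eps, 0 <= t -> 0 < eps ->
     exists delta, 0 < delta /\
       forall t' u' mu', 0 <= t' -> Rabs (t' - t) < delta ->
         norm (minus u' u) < delta -> mdist P mu' mu < delta ->
         norm (minus (F t' u' mu') (F t u mu)) < eps)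
  (* continuous in (u, mu) uniformly with respect to t >= 0 *)
  (HFu : forall u mu eps, 0 < eps ->
     exists delta, 0 < delta /\
       forall t u' mu', 0 <= t ->
         norm (minus u' u) < delta -> mdist P mu' mu < delta ->
         norm (minus (F t u' mu') (F t u mu)) < eps)
  (* {F(t,u,mu) | t >= 0} relatively compact *)
  (HFrc : forall u mu, relatively_compact (fun y => exists t, 0 <= t /\ y = F t u mu))
  (* Fhat continuous on E x P *)
  (HFhc : forall u mu eps, 0 < eps ->
     exists delta, 0 < delta /\
       forall u' mu', norm (minus u' u) < delta -> mdist P mu' mu < delta ->
         norm (minus (Fhat u' mu') (Fhat u mu)) < eps)
  (* Fhat(u,mu) = lim_{T->+oo, v->u, nu->mu} avg, uniformly in h > 0 *)
  (HFhat : forall u mu eps, 0 < eps ->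
     exists T0 delta, 0 < delta /\
       forall h T v nu, 0 < h -> T0 < T ->
         norm (minus v u) < delta -> mdist P nu mu < delta ->
         norm (minus (avg F T h v nu) (Fhat u mu)) < eps)
  (Q : E -> Prop) (HQ : compact_set Q)
  (Tn : nat -> R) (HTpos : forall n, 0 < Tn n)
  (HTinf : forall M, exists N, forall n, (N <= n)%nat -> M < Tn n)
  (mun : nat -> P) (mu0 : P)
  (Hmu : forall eps, 0 < eps -> exists N, forall n, (N <= n)%nat -> mdist P (mun n) mu0 < eps) :
  forall eps, 0 < eps -> exists N, forall n w h, (N <= n)%nat -> Q w -> 0 < h ->
    norm (minus (avg F (Tn n) h w (mun n)) (Fhat w mu0)) < eps.
Proof.
  intros eps Heps.
  pose (Local := fun c T r =>
    (forall h T' v nu, 0 < h -> T < T' -> norm (minus v c) < r -> mdist P nu mu0 < r ->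
       norm (minus (avg F T' h v nu) (Fhat c mu0)) < eps / 2) /\
    (forall u, norm (minus u c) < r -> norm (minus (Fhat u mu0) (Fhat c mu0)) < eps / 2)).
  assert (Hloc : forall c, Q c -> exists T r, 0 < r /\ Local c T r).
  { intros c _.
    destruct (HFhat c mu0 (eps / 2)) as [T [d1 [Hd1 Havg]]]; [lra|].
    destruct (HFhc c mu0 (eps / 2)) as [d2 [Hd2 Hcont]]; [lra|].
    pose proof (Rmin_l d1 d2). pose proof (Rmin_r d1 d2).
    exists T, (Rmin d1 d2). split; [now apply Rmin_pos|]. split.
    - intros h T' v nu Hh HT Hv Hnu. apply Havg; auto; lra.
    - intros u Hu. apply Hcont; [lra|].
      rewrite (proj2 (mdist_eq0 P mu0 mu0) eq_refl). exact Hd2. }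
  destruct (compact_uniform_threshold_radius E Q Local HQ Hloc) as [M [m [Hm Hunif]]].
  destruct (HTinf M) as [N1 HN1]. destruct (Hmu m Hm) as [N2 HN2].
  exists (Nat.max N1 N2). intros n w h Hn Qw Hh.
  destruct (Hunif w Qw) as [c [T [r [[Havg Hcont] [Hw [HTM Hmr]]]]]].
  assert (Hclose_avg : norm (minus (avg F (Tn n) h w (mun n)) (Fhat c mu0)) < eps / 2).
  { apply Havg; auto.
    - specialize (HN1 n ltac:(lia)). lra.
    - specialize (HN2 n ltac:(lia)). lra. }
  assert (Hclose_hat : norm (minus (Fhat c mu0) (Fhat w mu0)) < eps / 2).
  { rewrite <- norm_opp, opp_minus. now apply Hcont. }
  rewrite (minus_trans (Fhat c mu0)).
  eapply Rle_lt_trans; [apply (@norm_triangle R_AbsRing E) | lra].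
Qed.
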